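(* Let $(X,T)$ be a CAM $G$-system and let $(Y,S)$ be a topological factor of $(X,T)$, i.e. there is a continuous surjection $\pi\colon X\to Y$ with $\pi\circ T_g=S_g\circ\pi$ for all $g\in G$. If the action $S$ of $G$ on $Y$ is faithful, then $(Y,S)$ is CAM. In particular, if $G=\mathbb{Z}$ and $Y$ is infinite, then $(Y,S)$ is a CAM $\mathbb{Z}$-system.
   Context: Let $G$ be a countable discrete group. A topological $G$-system $(X,T)$ consists of a compact metric space $X$ and an action $T\colon G\to\mathrm{Homeo}(X)$, $g\mapsto T_g$. The system is topologically transitive if for all nonempty open $U,V\subseteq X$ there is $g\in G$ with $T_gU\cap V\neq\emptyset$; the action is faithful if $T_g=\mathrm{id}_X$ only when $g$ is the identity. A point is periodic if its $G$-orbit is finite. The system is chaotic almost minimal (CAM) if: (1) it is topologically transitive and the action is faithful; (2) the periodic points are dense in $X$; (3) every proper closed $T$-invariant subset of $X$ is finite. *)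

From HB Require Import structures.
From mathcomp Require Import all_boot all_order all_algebra.
From mathcomp Require Import all_classical all_reals all_analysis.
Set Implicit Arguments. Unset Strict Implicit. Unset Printing Implicit Defensive.
Import Order.TTheory GRing.Theory Num.Theory.
Local Open Scope classical_set_scope.

Record cgroup := CGroup {
  gcarrier :> countType;
  gmul : gcarrier -> gcarrier -> gcarrier;
  gone : gcarrier;
  ginv : gcarrier -> gcarrier;
  gmulA : forall a b c, gmul a (gmul b c) = gmul (gmul a b) c;
  gmul1 : forall a, gmul gone a = a;
  gmulV : forall a, gmul (ginv a) a = gone }.

Definition int_cgroup : cgroup :=
  @CGroup int (fun a b => (a + b)%R) 0%R (fun a => (- a)%R)
    (fun a b c => addrA a b c) (fun a => add0r a) (fun a => addNr a).

Definition compact_metric (R : realType) (X : pseudoMetricType R) : Prop :=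
  compact [set: X] /\ hausdorff_space X.

(* T : G -> X -> X is an action by homeomorphisms (a group homomorphism
   G -> Homeo(X)); each T g is then a homeomorphism with inverse T g^-1. *)
Definition is_action (G : cgroup) (X : topologicalType) (T : G -> X -> X) : Prop :=
  [/\ forall g, continuous (T g),
      T (gone G) = id &
      forall g h, T (gmul g h) = T g \o T h].

Definition top_transitive (G : cgroup) (X : topologicalType) (T : G -> X -> X) :=
  forall U V : set X, open U -> open V -> U !=set0 -> V !=set0 ->
    exists g, (T g @` U) `&` V !=set0.

Definition faithful_action (G : cgroup) (X : Type) (T : G -> X -> X) :=
  forall g, T g = id -> g = gone G.

Definition periodic_point (G : cgroup) (X : Type) (T : G -> X -> X) (x : X) :=
  finite_set (range (fun g => T g x)).

Definition invariant_set (G : cgroup) (X : Type) (T : G -> X -> X) (A : set X) :=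
  forall g, T g @` A `<=` A.

Definition CAM (G : cgroup) (X : topologicalType) (T : G -> X -> X) : Prop :=
  [/\ top_transitive T /\ faithful_action T,
      dense (periodic_point T) &
      forall A : set X, closed A -> invariant_set T A -> A <> [set: X] ->
        finite_set A].

Definition factor_map (G : cgroup) (X Y : topologicalType)
  (T : G -> X -> X) (S : G -> Y -> Y) (pi : X -> Y) : Prop :=
  [/\ continuous pi, (forall y : Y, exists x : X, pi x = y) &
      forall g, pi \o T g = S g \o pi].

(* A factor inherits topological transitivity and density of periodic points
   directly through the semiconjugacy, and the preimage of a proper closed
   invariant set of the factor is a proper closed invariant set upstairs, hence
   finite, so its image is finite too.  For G = Z faithfulness comes for free:
   if S_n = id with n <> 0 then the action factors through the finite group
   Z/nZ, and a topologically transitive action of finitely many continuous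
   maps on a Hausdorff space consists of a single orbit, so Y would be finite. *)
From mathcomp Require Import all_boot all_order all_algebra.
From mathcomp Require Import all_classical all_reals all_analysis.
Set Implicit Arguments. Unset Strict Implicit. Unset Printing Implicit Defensive.
Import GRing.Theory.
Local Open Scope classical_set_scope.

Section Factor.
Variables (G : cgroup) (X Y : topologicalType).
Variables (T : G -> X -> X) (S : G -> Y -> Y) (pi : X -> Y).
Hypothesis piF : factor_map T S pi.

Lemma factor_mapE g x : pi (T g x) = S g (pi x).
Proof. by case: piF => _ _ comm; have := congr1 (fun f => f x) (comm g). Qed.

Lemma factor_map_surj : range pi = [set: Y].
Proof.
by case: piF => _ surj _; apply/seteqP; split=> // y _; have [x] := surj y; exists x.
Qed.

Lemma factor_open_preimage {U : set Y} : open U -> open (pi @^-1` U).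
Proof. by case: piF => cpi _ _; apply: open_comp => x _; apply: cpi. Qed.

Lemma factor_preimage0 {U : set Y} : U !=set0 -> pi @^-1` U !=set0.
Proof. by case=> y Uy; case: piF => _ surj _; have [x xy] := surj y; exists x; rewrite /= xy. Qed.

Lemma top_transitive_factor : top_transitive T -> top_transitive S.
Proof.
move=> trT U V oU oV U0 V0.
have [g [_ [[x Ux <-] Vx]]] := trT _ _ (factor_open_preimage oU)
  (factor_open_preimage oV) (factor_preimage0 U0) (factor_preimage0 V0).
by exists g, (pi (T g x)); split=> //; exists (pi x); rewrite ?factor_mapE.
Qed.

Lemma periodic_point_factor x : periodic_point T x -> periodic_point S (pi x).
Proof.
rewrite /periodic_point.
have -> : range (fun g => S g (pi x)) = pi @` range (fun g => T g x).
  apply/seteqP; split=> y.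
    by case=> g _ <-; exists (T g x); [exists g | rewrite factor_mapE].
  by case=> _ [g _ <-] <-; exists g; rewrite ?factor_mapE.
exact: finite_image.
Qed.

Lemma dense_periodic_factor : dense (periodic_point T) -> dense (periodic_point S).
Proof.
move=> dT W W0 oW.
have [x [Wx Px]] := dT _ (factor_preimage0 W0) (factor_open_preimage oW).
by exists (pi x); split=> //; apply: periodic_point_factor.
Qed.

Lemma factor_invariant_preimage (A : set Y) :
  invariant_set S A -> invariant_set T (pi @^-1` A).
Proof. by move=> iA g _ [x Ax <-]; rewrite /= factor_mapE; apply: (iA g); exists (pi x). Qed.

Lemma factor_proper_preimage (A : set Y) :
  A <> [set: Y] -> pi @^-1` A <> [set: X].
Proof.
move=> nA piA; apply: nA; rewrite -(image_preimage A factor_map_surj) piA.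
exact: factor_map_surj.
Qed.

Lemma CAM_factor : CAM T -> faithful_action S -> CAM S.
Proof.
case=> -[trT _] dT finT faS; split.
- by split=> //; apply: top_transitive_factor.
- exact: dense_periodic_factor.
move=> A cA iA nA; rewrite -(image_preimage A factor_map_surj).
apply/finite_image/finT.
- by case: piF => cpi _ _; apply: preimage_closed => // x _; apply: cpi.
- exact: factor_invariant_preimage.
- exact: factor_proper_preimage.
Qed.

End Factor.

(* Y is then a single orbit: if z avoided the orbit of y, separate each of the
   finitely many points S (f j) y from z; the open set of points u whose j-th
   image lies in the j-th neighbourhood of S (f j) y for every j is never
   mapped into the intersection of the neighbourhoods of z. *)
Lemma transitive_finite_maps_orbit (G : cgroup) (Y : topologicalType)
    (S : G -> Y -> Y) (N : nat) (f : 'I_N -> G) :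
  hausdorff_space Y -> (forall g, continuous (S g)) -> top_transitive S ->
  (forall g, exists j, S g = S (f j)) ->
  forall y z : Y, exists j, S (f j) y = z.
Proof.
rewrite open_hausdorff => hY cS trS Sf y z.
apply: contrapT => /forallNP zN.
have sep j : exists AB : set Y * set Y,
    [/\ nbhs (S (f j) y) AB.1, nbhs z AB.2 & AB.1 `&` AB.2 = set0].
  have [AB [/set_mem yA /set_mem zB] [oA oB /eqP AB0]] := hY _ _ (introN eqP (zN j)).
  by exists AB; split=> //; apply: open_nbhs_nbhs.
have [AB ABP] := choice sep.
have nU : nbhs y [set u | forall j, (AB j).1 (S (f j) u)].
  by apply: filter_forall => j; case: (ABP j) => nA _ _; apply: cS.
have nV : nbhs z [set v | forall j, (AB j).2 v].
  by apply: filter_forall => j; case: (ABP j).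
move: nU nV; rewrite !nbhsE => -[U [oU Uy] sU] [V [oV Vz] sV].
have [g [_ [[u Uu <-] Vgu]]] := trS U V oU oV (ex_intro _ y Uy) (ex_intro _ z Vz).
have [j Sgj] := Sf g; case: (ABP j) => _ _ AB0.
suff : ((AB j).1 `&` (AB j).2) (S (f j) u) by rewrite AB0.
by split; [apply: sU | rewrite -Sgj; apply: sV].
Qed.

Lemma transitive_finite_maps_finite (G : cgroup) (Y : topologicalType)
    (S : G -> Y -> Y) (N : nat) (f : 'I_N -> G) :
  hausdorff_space Y -> (forall g, continuous (S g)) -> top_transitive S ->
  (forall g, exists j, S g = S (f j)) -> finite_set [set: Y].
Proof.
move=> hY cS trS Sf.
have [->|/set0P[y _]] := eqVneq [set: Y] set0; first exact: finite_set0.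
have -> : [set: Y] = range (fun j => S (f j) y).
  apply/seteqP; split=> // z _.
  by have [j <-] := transitive_finite_maps_orbit hY cS trS Sf y z; exists j.
exact/finite_image/finite_finset.
Qed.

Section IntAction.
Variables (Y : Type) (S : int -> Y -> Y).
Hypothesis S0 : S 0%R = id.
Hypothesis SD : forall a b : int, S (a + b)%R = S a \o S b.

Lemma int_action_periodN n : S (- n)%R = id -> S n = id.
Proof. by move=> Sn; have := SD n (- n); rewrite addrN S0 Sn => /esym. Qed.

Lemma int_action_period_mul N k : S (Posz N) = id -> S (Posz (k * N)) = id.
Proof. by move=> SN; elim: k => [|k IH]; rewrite ?mul0n // mulSn PoszD SD SN IH. Qed.

Lemma int_action_period_ord N : (0 < N)%N -> S (Posz N) = id ->
  forall g : int, exists j : 'I_N, S g = S (Posz j).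
Proof.
move=> N0 SN.
have Snat m : exists j : 'I_N, S (Posz m) = S (Posz j).
  exists (Ordinal (ltn_pmod m N0)).
  by rewrite /= {1}(divn_eq m N) PoszD addrC SD int_action_period_mul.
case=> [m|m]; first exact: Snat.
(* shift the negative exponent -(m+1) by the multiple (m+1) N of the period *)
have [j Sj] := Snat (m.+1 * N - m.+1)%N; exists j; rewrite -Sj.
rewrite -subzn ?leq_pmulr // addrC SD int_action_period_mul // NegzE.
Qed.

Lemma int_action_nontrivial_period n : S n = id -> n != 0%R ->
  exists2 N, (0 < N)%N & S (Posz N) = id.
Proof.
case: n => m Sm m0; first by exists m => //; rewrite lt0n; apply: contraNneq m0 => ->.
by exists m.+1 => //; apply: int_action_periodN; rewrite -NegzE.
Qed.

End IntAction.

Lemma transitive_int_action_faithful (Y : topologicalType) (S : int_cgroup -> Y -> Y) :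
  is_action S -> hausdorff_space Y -> top_transitive S ->
  infinite_set [set: Y] -> faithful_action S.
Proof.
case=> cS S0 SD hY trS infY n Sn; apply/eqP; apply: contraT => n0; exfalso.
have [N N0 SN] := int_action_nontrivial_period S0 SD Sn n0.
apply/infY/(@transitive_finite_maps_finite int_cgroup _ S N (fun j => Posz j)) => //.
exact: int_action_period_ord.
Qed.

Theorem proposition2p6 (R : realType) :
  (forall (G : cgroup) (X Y : pseudoMetricType R)
     (T : G -> X -> X) (S : G -> Y -> Y) (pi : X -> Y),
     compact_metric X -> compact_metric Y ->
     is_action T -> is_action S ->
     CAM T -> factor_map T S pi ->
     faithful_action S -> CAM S) /\
  (forall (X Y : pseudoMetricType R)
     (T : int_cgroup -> X -> X) (S : int_cgroup -> Y -> Y) (pi : X -> Y),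
     compact_metric X -> compact_metric Y ->
     is_action T -> is_action S ->
     CAM T -> factor_map T S pi ->
     infinite_set [set: Y] -> CAM S).
Proof.
split=> [G X Y T S pi _ _ _ _ camT piF faS|X Y T S pi _ [_ hY] _ aS camT piF infY].
  exact: CAM_factor piF camT faS.
apply: (CAM_factor piF camT) (transitive_int_action_faithful aS hY _ infY).
by case: camT => -[trT _] _ _; apply: top_transitive_factor piF trT.
Qed.
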